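(* Let $p,q$ be positive integers and let $s_1,\dots,s_p,d_1,\dots,d_q:[0,1]\to[0,1]$ be the truth functions of the hedge connectives of FLn with many hedges; that is, writing $s_0=d_0=\mathrm{id}_{[0,1]}$, for all $a,b\in[0,1]$: (1) $a\Rightarrow b\ \le\ h(a)\Rightarrow h(b)$ for every $h\in\{s_1,\dots,s_p,d_1,\dots,d_q\}$; (2) $s_i(a)\le s_{i-1}(a)$ for $i=1,\dots,p$; (3) $s_p(1)=1$; (4) $d_{j-1}(a)\le d_j(a)$ for $j=1,\dots,q$; (5) $d_q(0)=0$. Then every $h\in\{s_1,\dots,s_p,d_1,\dots,d_q\}$ is logically fitting.
   Context: Truth values form the Łukasiewicz algebra on $[0,1]$: $a\otimes b=\max(0,a+b-1)$, $a\Rightarrow b=\min(1,1-a+b)$, $a\Leftrightarrow b=(a\Rightarrow b)\wedge(b\Rightarrow a)$, with $\wedge=\min$. A unary operation $h:[0,1]\to[0,1]$ is logically fitting if there is a natural number $k>0$ such that $(a\Leftrightarrow b)^k\le h(a)\Leftrightarrow h(b)$ for all $a,b\in[0,1]$, where $x^k=x\otimes\cdots\otimes x$ ($k$ times). FLn with many hedges extends the first-order fuzzy logic FLn by truth-stressing hedges $s_1,\dots,s_p$ and truth-depressing hedges $d_1,\dots,d_q$ with degree-1 logical axioms $(A\to B)\to(hA\to hB)$, $s_iA\to s_{i-1}A$, $s_p\overline{1}$, $d_{j-1}A\to d_jA$, $\neg d_q\overline{0}$; conditions (1)–(5) express that these axioms have truth value 1 in every structure, where $\mathcal{D}(hA)=h(\mathcal{D}(A))$.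 *)

From Stdlib Require Import Reals.
Open Scope R_scope.

Definition unit_iv (x : R) : Prop := 0 <= x <= 1.

Definition luk_mul (a b : R) : R := Rmax 0 (a + b - 1).
Definition luk_impl (a b : R) : R := Rmin 1 (1 - a + b).
Definition luk_equiv (a b : R) : R := Rmin (luk_impl a b) (luk_impl b a).

Fixpoint luk_pow (x : R) (k : nat) : R :=
  match k with
  | O => 1
  | S n => luk_mul x (luk_pow x n)
  end.

Definition logically_fitting (h : R -> R) : Prop :=
  exists k : nat, (0 < k)%nat /\
    forall a b, unit_iv a -> unit_iv b ->
      luk_pow (luk_equiv a b) k <= luk_equiv (h a) (h b).

(* family of hedges indexed from 1, with index 0 the identity *)
Definition hedge0 (f : nat -> R -> R) (i : nat) : R -> R :=
  match i with
  | O => fun x => x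
  | _ => f i
  end.

(* Condition (1), applied in both directions, already gives
   [a <=> b <= h a <=> h b]; so every hedge is logically fitting with [k = 1]. *)

From Stdlib Require Import Reals Lra Lia.
Open Scope R_scope.

Lemma luk_mul_1l (x : R) : unit_iv x -> luk_mul x 1 = x.
Proof.
  intros [x_ge0 _]; unfold luk_mul.
  replace (x + 1 - 1) with x by ring.
  now apply Rmax_right.
Qed.

Lemma luk_pow_1 (x : R) : unit_iv x -> luk_pow x 1 = x.
Proof. exact (luk_mul_1l x). Qed.

Lemma luk_impl_unit (a b : R) : unit_iv a -> unit_iv b -> unit_iv (luk_impl a b).
Proof.
  intros Ha Hb; unfold unit_iv, luk_impl in *; split.
  - apply Rmin_glb; lra.
  - apply Rmin_l.
Qed.

Lemma luk_equiv_unit (a b : R) : unit_iv a -> unit_iv b -> unit_iv (luk_equiv a b).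
Proof.
  intros Ha Hb; unfold luk_equiv.
  apply Rmin_case; now apply luk_impl_unit.
Qed.

Lemma luk_equiv_le_of_impl (a b a' b' : R) :
  luk_impl a b <= luk_impl a' b' -> luk_impl b a <= luk_impl b' a' ->
  luk_equiv a b <= luk_equiv a' b'.
Proof.
  intros Hab Hba; unfold luk_equiv.
  apply Rmin_glb.
  - eapply Rle_trans; [apply Rmin_l | exact Hab].
  - eapply Rle_trans; [apply Rmin_r | exact Hba].
Qed.

Lemma logically_fitting_of_impl_mono (h : R -> R) :
  (forall a b, unit_iv a -> unit_iv b -> luk_impl a b <= luk_impl (h a) (h b)) ->
  logically_fitting h.
Proof.
  intros h_impl; exists 1%nat; split; [lia |].
  intros a b Ha Hb.
  rewrite luk_pow_1 by now apply luk_equiv_unit.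
  apply luk_equiv_le_of_impl; auto.
Qed.

Theorem mainTheorem4 (p q : nat) (s d : nat -> R -> R) :
  (0 < p)%nat -> (0 < q)%nat ->
  (* the hedges map [0,1] into [0,1] *)
  (forall i, (1 <= i <= p)%nat -> forall a, unit_iv a -> unit_iv (s i a)) ->
  (forall j, (1 <= j <= q)%nat -> forall a, unit_iv a -> unit_iv (d j a)) ->
  (* (1) *)
  (forall i, (1 <= i <= p)%nat -> forall a b, unit_iv a -> unit_iv b ->
     luk_impl a b <= luk_impl (s i a) (s i b)) ->
  (forall j, (1 <= j <= q)%nat -> forall a b, unit_iv a -> unit_iv b ->
     luk_impl a b <= luk_impl (d j a) (d j b)) ->
  (* (2) with s_0 = id *)
  (forall i, (1 <= i <= p)%nat -> forall a, unit_iv a ->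
     s i a <= hedge0 s (i - 1) a) ->
  (* (3) *)
  s p 1 = 1 ->
  (* (4) with d_0 = id *)
  (forall j, (1 <= j <= q)%nat -> forall a, unit_iv a ->
     hedge0 d (j - 1) a <= d j a) ->
  (* (5) *)
  d q 0 = 0 ->
  (forall i, (1 <= i <= p)%nat -> logically_fitting (s i)) /\
  (forall j, (1 <= j <= q)%nat -> logically_fitting (d j)).
Proof.
  intros _ _ _ _ s_impl d_impl _ _ _ _.
  split; intros i Hi; apply logically_fitting_of_impl_mono; auto.
Qed.
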